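(* For all integers $k\ge n\ge1$, the transition matrix $\bar K$ of the Burnside process on $\Pi_n$ satisfies $$\bar K(x,y)\ge\frac{1}{(n+1)^{n-1}}\quad\text{for all }x,y\in\Pi_n.$$
   Context: $S_k$ acts on $[k]^n$ by $\sigma(u_1,\dots,u_n)=(\sigma(u_1),\dots,\sigma(u_n))$. The Burnside process on $[k]^n$: from $u$, choose $\sigma$ uniformly among permutations of $[k]$ fixing every value appearing in $u$, then choose each coordinate of the new state independently and uniformly among the fixed points of $\sigma$. $\Pi_n$ is the set of set partitions of $[n]$; the partition of $u$ puts $i,j$ in the same block iff $u_i=u_j$, and the orbits of the action are the sets of vectors with a given partition. The Burnside process on $\Pi_n$ is the lumped chain: $\bar K(x,y)$ is the probability that one step of the Burnside process on $[k]^n$ started from any $u$ with partition $x$ lands on a vector with partition $y$. *)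

From mathcomp Require Import all_boot all_order all_algebra all_fingroup.
Set Implicit Arguments. Unset Strict Implicit. Unset Printing Implicit Defensive.
Import GRing.Theory Num.Theory.
Local Open Scope ring_scope.

(* States of the Burnside process on [k]^n : vectors u : 'I_n -> 'I_k. *)
Definition vec (n k : nat) := {ffun 'I_n -> 'I_k}.

Definition stab (n k : nat) (u : vec n k) : {set {perm 'I_k}} :=
  [set s : {perm 'I_k} | [forall i : 'I_n, s (u i) == u i]].

Definition nfix (k : nat) (s : {perm 'I_k}) : nat := #|[set a : 'I_k | s a == a]|.

(* One-step transition probability of the Burnside process on [k]^n:
   pick s uniformly in stab u, then each coordinate uniformly in Fix(s);
   v is reachable from s iff all its values are fixed by s, with
   probability 1 / nfix(s)^n. *)
Definition BK (n k : nat) (u v : vec n k) : rat :=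
  \sum_(s in stab u | [forall i : 'I_n, s (v i) == v i])
     ((#|stab u|%:R)^-1 * (((nfix s) ^ n)%N%:R)^-1).

Definition vpart (n k : nat) (u : vec n k) : {set {set 'I_n}} :=
  preim_partition u [set: 'I_n].

(* Lumped kernel started from u (with partition x = vpart u) to partition y. *)
Definition BKbar_from (n k : nat) (u : vec n k) (y : {set {set 'I_n}}) : rat :=
  \sum_(v : vec n k | vpart v == y) BK u v.

(* For s in the pointwise stabiliser G of the set A of values of u, let w(s) be
   the number of s-fixed j-tuples of distinct points outside A, where j is the
   number of blocks of y beyond #|A|.  Labelling the blocks of y by points of A
   followed by such a tuple, and then swapping a chosen point of A with any
   fixed point c of s, yields nfix(s) * w(s) distinct s-fixed vectors with
   partition y.  By the Cauchy-Frobenius lemma the weights w(s) sum to at least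
   #|G|, and since the stabiliser of a tuple acts transitively on the points
   outside A and the tuple, the w-weighted mean of nfix(s) is at most
   #|A| + j + 1 <= n + 1.  Convexity of x |-> x^-(n-1) then gives
   Kbar(x, y) >= #|G|^-1 * sum_s w(s) nfix(s)^-(n-1) >= (n + 1)^-(n-1). *)

From mathcomp Require Import all_boot all_order all_algebra all_fingroup primitive_action.
From mathcomp Require Import zify ring lra.
Set Implicit Arguments. Unset Strict Implicit. Unset Printing Implicit Defensive.
Import Order.TTheory GRing.Theory Num.Theory.

Lemma eq_preim_partition (T : finType) (R1 R2 : eqType) (f : T -> R1) (g : T -> R2)
    (D : {set T}) :
  (forall i i', (f i == f i') = (g i == g i')) ->
  preim_partition f D = preim_partition g D.
Proof.
move=> fg; apply: eq_imset => x; apply/setP => z.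
by rewrite !inE fg.
Qed.

Lemma card_partition_le (T : finType) (P : {set {set T}}) (D : {set T}) :
  partition P D -> #|P| <= #|D|.
Proof.
move=> hP; rewrite (card_partition hP) -sum1_card leq_sum // => B PB.
by rewrite card_gt0 (partition_neq0 hP PB).
Qed.

Section BlockIndex.
Variables (T : finType) (y : {set {set T}}).
Hypothesis hy : partition y [set: T].

Definition block_index (i : T) : nat := index (pblock y i) (enum y).

Lemma pblock_memT i : pblock y i \in y.
Proof. by apply: pblock_mem; case/and3P: hy => /eqP ->. Qed.

Lemma block_index_lt i : block_index i < #|y|.
Proof. by rewrite /block_index cardE index_mem mem_enum pblock_memT. Qed.

Lemma eq_block_index i i' :
  (block_index i == block_index i') = (pblock y i == pblock y i').
Proof.
rewrite /block_index; apply/eqP/eqP => [|-> //].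
by apply: (@index_inj _ set0 (enum y)); rewrite mem_enum pblock_memT.
Qed.

Lemma block_index_onto l : l < #|y| -> exists i, block_index i = l.
Proof.
rewrite cardE => l_lt.
have yl : nth set0 (enum y) l \in y by rewrite -mem_enum mem_nth.
have /set0Pn[i il] := partition_neq0 hy yl.
exists i; rewrite /block_index (def_pblock (partition_trivIset hy) yl il).
by rewrite index_uniq ?enum_uniq.
Qed.

Variables (V : eqType) (x0 : V).

Definition label_blocks (vs : seq V) (i : T) : V := nth x0 vs (block_index i).

Lemma label_blocks_mem i vs : size vs = #|y| -> label_blocks vs i \in vs.
Proof. by move=> vs_y; rewrite mem_nth // vs_y block_index_lt. Qed.

Lemma preim_partition_label_blocks vs : uniq vs -> size vs = #|y| ->
  preim_partition (label_blocks vs) [set: T] = y.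
Proof.
move=> vs_uniq vs_y; rewrite -[RHS](preim_partition_pblock hy).
apply: eq_preim_partition => i i'.
by rewrite nth_uniq ?vs_y ?block_index_lt // eq_block_index.
Qed.

Lemma label_blocks_inj vs ws : size vs = #|y| -> size ws = #|y| ->
  label_blocks vs =1 label_blocks ws -> vs = ws.
Proof.
move=> vs_y ws_y eq_vw; apply: (@eq_from_nth _ x0); first by rewrite vs_y.
by move=> l; rewrite vs_y => /block_index_onto[i <-]; apply: eq_vw.
Qed.

End BlockIndex.

Section TotalAction.
Variables (aT : finGroupType) (T : finType) (to : {action aT &-> T}).
Local Open Scope group_scope.

Lemma exchange_big_afix (G : {set aT}) (S : {set T}) (F : aT -> T -> nat) :
  \sum_(a in G) \sum_(x in 'Fix_(S | to)[a]) F a x =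
  \sum_(x in S) \sum_(a in 'C_G[x | to]) F a x.
Proof.
rewrite (exchange_big_dep [in S]) => [|a x _ /setIP[] //].
apply: eq_bigr => x Sx; apply: eq_bigl => a.
rewrite [RHS]in_setI.
apply/andP/andP => [[Ga /setIP[_ /afix1P fx]] | [Ga /astab1P fx]].
  by split=> //; apply/astab1P.
by split=> //; rewrite inE Sx; apply/afix1P.
Qed.

Lemma sum_card_afix_le (H : {group aT}) (S : {set T}) :
  [acts H, on S | to] ->
  {in S &, forall x x', exists2 a, a \in H & to x a = x'} ->
  \sum_(a in H) #|'Fix_(S | to)[a]| <= #|H|.
Proof.
move=> actsHS trans; rewrite (Frobenius_Cauchy actsHS) -[leqRHS]mul1n leq_mul2r.
apply/orP; right.
rewrite -(cards1 S) subset_leq_card //; apply/subsetP => _ /imsetP[x Sx ->].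
rewrite inE; apply/eqP/setP => x'; apply/imsetP/idP => [[a Ha ->]|Sx'].
  by rewrite (astabs_act _ (subsetP actsHS a Ha)).
by have [a Ha <-] := trans x x' Sx Sx'; exists a.
Qed.

End TotalAction.

Section PermFix.
Variable X : finType.
Local Open Scope group_scope.

Lemma sum_card_afix_compl_le (B : {set X}) :
  \sum_(s in 'C(B | 'P)) #|'Fix_(~: B | 'P)[s]| <= #|'C(B | 'P)|.
Proof.
apply: sum_card_afix_le => [|x x']; first by rewrite /= astabsC astab_sub.
rewrite !inE => xB x'B; exists (tperm x x'); last by rewrite /= apermE tpermL.
apply/astabP => z zB; rewrite /= apermE tpermD //.
  by apply: contraNneq xB => ->.
by apply: contraNneq x'B => ->.
Qed.

End PermFix.

Section PointwiseStabiliser.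
Variables (X : finType) (A : {set X}) (j : nat).
Local Open Scope group_scope.
Local Notation G := 'C(A | 'P).
Local Notation T := (j.-dtuple(~: A)).

Definition fix_dtuples (s : {perm X}) : {set j.-tuple X} := 'Fix_(T | 'P * j)[s].

Definition outside (t : j.-tuple X) : {set X} := ~: (A :|: [set x in t]).

Lemma n_act_perm_fixP (s : {perm X}) (t : j.-tuple X) :
  reflect (forall i, s (tnth t i) = tnth t i) (('P * j)%act t s == t).
Proof.
apply: (iffP eqP) => [fix_t i | fix_t].
  by rewrite -[in RHS]fix_t /= tnth_map.
by apply: eq_from_tnth => i /=; rewrite tnth_map; apply: fix_t.
Qed.

Lemma acts_dtuple_compl : [acts G, on T | 'P * j].
Proof.
apply/subsetP => s Gs; rewrite !inE; apply/subsetP => t Tt; rewrite inE.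
by apply: n_act_dtuple Tt; rewrite astabsC (subsetP (astab_sub _ _)).
Qed.

Lemma card_astab_le_sum_fix_dtuples : j <= #|~: A| ->
  #|G| <= \sum_(s in G) #|fix_dtuples s|.
Proof.
move=> j_le; rewrite (Frobenius_Cauchy acts_dtuple_compl) leq_pmull // card_gt0.
have t_size : size (take j (enum (~: A))) == j by rewrite size_takel // -cardE.
apply/set0Pn; exists (orbit ('P * j)%act G (Tuple t_size)); apply: imset_f.
rewrite inE take_uniq ?enum_uniq //=.
by apply/subsetP => x /mem_take; rewrite mem_enum.
Qed.

Lemma astab_dtuple (t : j.-tuple X) :
  'C_G[t | 'P * j] = 'C(A :|: [set x in t] | 'P).
Proof.
rewrite astabU; congr (_ :&: _); apply/setP => s.
apply/astab1P/astabP => [/eqP/n_act_perm_fixP fix_t x | fix_t].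
  by rewrite inE => /tnthP[i ->]; apply: fix_t.
by apply/eqP/n_act_perm_fixP => i; apply: fix_t; rewrite inE mem_tnth.
Qed.

Lemma card_afix_perm_le (s : {perm X}) (t : j.-tuple X) :
  #|'Fix_'P[s]| <= #|A| + j + #|'Fix_(outside t | 'P)[s]|.
Proof.
have fix_sub : 'Fix_'P[s] \subset A :|: [set x in t] :|: 'Fix_(outside t | 'P)[s].
  by apply/subsetP => x fx; rewrite in_setU in_setI fx andbT in_setC orbN.
apply: leq_trans (subset_leq_card fix_sub) _; apply: leq_trans (leq_card_setU _ _) _.
rewrite leq_add2r; apply: leq_trans (leq_card_setU _ _) _.
by rewrite leq_add2l cardsE (leq_trans (card_size t)) ?size_tuple.
Qed.

Lemma sum_fix_dtuples_mul_le :
  \sum_(s in G) #|fix_dtuples s| * #|'Fix_'P[s]| <=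
  (#|A| + j + 1) * \sum_(s in G) #|fix_dtuples s|.
Proof.
have sum_fixE (F : {perm X} -> nat) :
    \sum_(s in G) #|fix_dtuples s| * F s = \sum_(s in G) \sum_(t in fix_dtuples s) F s.
  by apply: eq_bigr => s _; rewrite sum_nat_const.
have outside_le : \sum_(s in G) \sum_(t in fix_dtuples s) #|'Fix_(outside t | 'P)[s]| <=
    \sum_(s in G) #|fix_dtuples s|.
  rewrite -[leqRHS](eq_bigr _ (fun s _ => muln1 _)) sum_fixE /fix_dtuples.
  rewrite !exchange_big_afix leq_sum // => t _.
  by rewrite sum1_card astab_dtuple; apply: sum_card_afix_compl_le.
rewrite sum_fixE mulnDl mul1n; apply: leq_trans (leq_add (leqnn _) outside_le).
rewrite mulnC big_distrl /= sum_fixE -big_split leq_sum // => s _.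
by rewrite -big_split leq_sum // => t _; apply: card_afix_perm_le.
Qed.

End PointwiseStabiliser.

Definition fixed_vecs (n k : nat) (y : {set {set 'I_n}}) (s : {perm 'I_k}) :
    {set vec n k} :=
  [set v : vec n k | (vpart v == y) && [forall i, s (v i) == v i]].

Section Encoding.
Variables (n k : nat) (y : {set {set 'I_n}}) (A : {set 'I_k}) (c0 : 'I_k).
Hypotheses (hy : partition y [set: 'I_n]) (c0A : c0 \in A) (n_gt0 : 0 < n).
Local Notation j := (#|y| - #|A|).

(* [#|y| - j = minn #|y| #|A|] distinct points of A, the first one being c0. *)
Definition anchors : seq 'I_k := c0 :: take (#|y| - j).-1 (enum (A :\ c0)).

Definition block_values (t : j.-tuple 'I_k) : seq 'I_k := anchors ++ t.

(* Swapping c0 and c keeps the partition and puts c on the block of index 0,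
   from which c, and then t, can be read off. *)
Definition encode (c : 'I_k) (t : j.-tuple 'I_k) : vec n k :=
  [ffun i => tperm c0 c (label_blocks y c0 (block_values t) i)].

Lemma card_partition_gt0 : 0 < #|y|.
Proof. exact: leq_ltn_trans (leq0n _) (block_index_lt hy (Ordinal n_gt0)). Qed.

Lemma size_block_values t : size (block_values t) = #|y|.
Proof.
have A_card := cardsD1 c0 A; rewrite c0A add1n in A_card.
have y_gt0 := card_partition_gt0.
rewrite /= size_cat size_tuple size_takel -?cardE;
  move: y_gt0 A_card; move: #|y| #|A| #|A :\ c0| => ? ? ?; lia.
Qed.

Lemma anchors_sub : {subset anchors <= A}.
Proof.
by move=> x; rewrite inE => /predU1P[-> //|/mem_take]; rewrite mem_enum inE => /andP[].
Qed.

Lemma uniq_block_values t : t \in j.-dtuple(~: A) -> uniq (block_values t).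
Proof.
rewrite inE => /andP[t_uniq /subsetP tA]; rewrite cat_uniq t_uniq andbT.
apply/andP; split.
  rewrite /= take_uniq ?enum_uniq ?andbT //.
  by apply/negP => /mem_take; rewrite mem_enum !inE eqxx.
apply/hasPn => x /tA; rewrite inE; apply: contraNN; exact: anchors_sub.
Qed.

Lemma vpart_encode c t : t \in j.-dtuple(~: A) -> vpart (encode c t) = y.
Proof.
move=> tT; rewrite -(preim_partition_label_blocks hy c0 (uniq_block_values tT)).
  by apply: eq_preim_partition => i i'; rewrite !ffunE (inj_eq perm_inj).
exact: size_block_values.
Qed.

Lemma encode_inj : injective (fun ct => encode ct.1 ct.2).
Proof.
move=> [c t] [c' t'] /= enc_eq.
have [i0 i0_first] := block_index_onto hy card_partition_gt0.
have c_eq : c = c'.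
  move/(congr1 (fun v : vec n k => v i0)): enc_eq.
  by rewrite !ffunE /label_blocks i0_first !tpermL.
subst c'; have labels_eq : label_blocks y c0 (block_values t) =1
    label_blocks y c0 (block_values t').
  move=> i; apply: (@perm_inj _ (tperm c0 c)).
  by move/(congr1 (fun v : vec n k => v i)): enc_eq; rewrite !ffunE.
move/eqP: (label_blocks_inj hy (size_block_values t) (size_block_values t') labels_eq).
by rewrite eqseq_cat // => /andP[_ /eqP/val_inj ->].
Qed.

Lemma encode_fixed s c t : s \in 'C(A | 'P)%g -> t \in fix_dtuples A j s -> s c = c ->
  [forall i, s (encode c t i) == encode c t i].
Proof.
move=> sA /setIP[_ /afix1P/eqP/n_act_perm_fixP fix_t] sc.
have fixA x : x \in A -> s x = x by move/(astab_act sA).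
have fix_values x : x \in block_values t -> s x = x.
  by rewrite mem_cat => /orP[/anchors_sub/fixA | /tnthP[i ->]].
apply/forallP => i; rewrite ffunE; apply/eqP.
have := fix_values _ (label_blocks_mem hy c0 i (size_block_values t)).
by case: tpermP => [_ _|_ _|_ _ ->]; rewrite ?sc ?fixA.
Qed.

Lemma card_afix_mul_card_fix_dtuples_le s : s \in 'C(A | 'P)%g ->
  #|'Fix_'P[s]%g| * #|fix_dtuples A j s| <= #|fixed_vecs y s|.
Proof.
move=> sA; rewrite -cardsX -(card_imset _ encode_inj) subset_leq_card //.
apply/subsetP => _ /imsetP[[c t] /setXP[/afix1P sc ft] ->].
have /setIP[tT _] := ft.
by rewrite inE vpart_encode ?eqxx ?encode_fixed.
Qed.

End Encoding.

Section Convexity.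
Local Open Scope ring_scope.
Variable R : realFieldType.

Lemma bernoulli_ineq (r : R) (p : nat) : 0 <= r -> 1 + p%:R * (r - 1) <= r ^+ p.
Proof.
move=> r_ge0; elim: p => [|p IHp]; first by rewrite mul0r addr0 expr0.
have sq_ge0 : 0 <= p%:R * (r - 1) ^+ 2 by rewrite mulr_ge0 ?sqr_ge0.
rewrite exprS -natr1; apply: le_trans (ler_wpM2l r_ge0 IHp); nra.
Qed.

Lemma tangent_le_invXn (p : nat) (x M : R) : 0 < x -> 0 < M ->
  (M ^+ p)^-1 * (p.+1%:R - p%:R * (x / M)) <= (x ^+ p)^-1.
Proof.
move=> x_gt0 M_gt0; set r := M / x.
have r_gt0 : 0 < r by rewrite divr_gt0.
have bern := bernoulli_ineq p.+1 (ltW r_gt0).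
have -> : (x ^+ p)^-1 = (M ^+ p)^-1 * r ^+ p.
  by rewrite exprMn exprVn mulrA mulVf ?mul1r // expf_neq0 // gt_eqF.
have Mp_ge0 : 0 <= (M ^+ p)^-1 by rewrite invr_ge0 exprn_ge0 // ltW.
rewrite ler_wpM2l // -(ler_pM2r r_gt0) -exprSr; apply: le_trans _ bern.
have -> : (p.+1%:R - p%:R * (x / M)) * r = 1 + p.+1%:R * (r - 1).
  by rewrite /r -natr1; field; rewrite !gt_eqF.
exact: lexx.
Qed.

Lemma weighted_sum_invXn_ge (I : finType) (P : {pred I}) (w x : I -> R) (M : R)
    (p : nat) :
  0 < M -> {in P, forall i, 0 <= w i} -> {in P, forall i, 0 < x i} ->
  \sum_(i in P) w i * x i <= M * \sum_(i in P) w i ->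
  (M ^+ p)^-1 * \sum_(i in P) w i <= \sum_(i in P) w i / x i ^+ p.
Proof.
move=> M_gt0 w_ge0 x_gt0 mean_le.
apply: le_trans (ler_sum _ (fun i Pi => ler_wpM2l (w_ge0 i Pi)
  (tangent_le_invXn p (x_gt0 i Pi) M_gt0))).
have -> : \sum_(i in P) w i * ((M ^+ p)^-1 * (p.+1%:R - p%:R * (x i / M))) =
    (M ^+ p)^-1 * (p.+1%:R * \sum_(i in P) w i - p%:R / M * \sum_(i in P) w i * x i).
  rewrite !mulr_sumr -sumrB mulr_sumr; apply: eq_bigr => i _.
  by field; rewrite expf_neq0 // gt_eqF.
have Mp_ge0 : 0 <= (M ^+ p)^-1 by rewrite invr_ge0 exprn_ge0 // ltW.
rewrite ler_wpM2l //.
have : p%:R / M * \sum_(i in P) w i * x i <= p%:R * \sum_(i in P) w i.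
  have pM_ge0 : 0 <= p%:R / M by rewrite divr_ge0 // ltW.
  by apply: le_trans (ler_wpM2l pM_ge0 mean_le) _; rewrite mulrA divfK ?gt_eqF.
rewrite -natr1; lra.
Qed.

Lemma invXn_le_average (I : finType) (G : {set I}) (w F B : I -> nat) (M n : nat) :
  (0 < #|G|)%N -> (0 < n)%N -> (0 < M)%N -> {in G, forall s, 0 < F s}%N ->
  {in G, forall s, F s * w s <= B s}%N ->
  (#|G| <= \sum_(s in G) w s)%N ->
  (\sum_(s in G) w s * F s <= M * \sum_(s in G) w s)%N ->
  ((M ^ n.-1)%:R : R)^-1 <=
  \sum_(s in G) (B s)%:R * ((#|G|%:R)^-1 * ((F s ^ n)%:R)^-1).
Proof.
case: n => // p G_gt0 _ M_gt0 F_gt0 FwB G_le mean_le; rewrite /= natrX.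
set g : R := (#|G|%:R)^-1.
have g_gt0 : 0 < g by rewrite invr_gt0 ltr0n.
have Mp_gt0 : 0 < (M%:R : R) ^+ p by rewrite exprn_gt0 // ltr0n.
apply: le_trans (_ : _ <= g * \sum_(s in G) (w s)%:R / (F s)%:R ^+ p) _.
  apply: le_trans (_ : _ <= g * (((M%:R : R) ^+ p)^-1 * \sum_(s in G) (w s)%:R)) _.
    rewrite mulrCA ler_pdivlMl // mulfV ?gt_eqF // ler_pdivlMl ?ltr0n //.
    by rewrite mulr1 -natr_sum ler_nat.
  rewrite ler_pM2l //; apply: weighted_sum_invXn_ge; rewrite ?ltr0n //.
  - by move=> s Gs; rewrite ltr0n F_gt0.
  - by under eq_bigr do rewrite -natrM; rewrite -!natr_sum -natrM ler_nat.
rewrite mulr_sumr; apply: ler_sum => s Gs.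
have Fs_neq0 : (F s)%:R != 0 :> R by rewrite pnatr_eq0 -lt0n F_gt0.
have -> : g * ((w s)%:R / (F s)%:R ^+ p) = (F s * w s)%:R * (g * ((F s ^ p.+1)%:R)^-1).
  by rewrite natrM natrX exprS; field; rewrite expf_neq0.
rewrite ler_wpM2r ?ler_nat ?FwB //.
by rewrite mulr_ge0 ?invr_ge0 ?ler0n // ltW.
Qed.

End Convexity.

Lemma stab_astab n k (u : vec n k) : stab u = 'C([set u i | i : 'I_n] | 'P)%g.
Proof.
apply/setP => s; rewrite inE.
apply/forallP/astabP => [fix_u _ /imsetP[i _ ->] | fix_A i].
  exact/eqP/fix_u.
by apply/eqP/fix_A/imset_f.
Qed.

Lemma nfixE k (s : {perm 'I_k}) : nfix s = #|'Fix_'P[s]%g|.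
Proof. by apply: eq_card => x; rewrite inE; apply/eqP/afix1P. Qed.

Local Open Scope ring_scope.

Lemma BKbar_from_stabE n k (u : vec n k) y :
  BKbar_from u y = \sum_(s in stab u)
    #|fixed_vecs y s|%:R * ((#|stab u|%:R)^-1 * (((nfix s) ^ n)%N%:R)^-1).
Proof.
rewrite /BKbar_from /BK (exchange_big_dep (mem (stab u))) /= => [|v s _ /andP[] //].
apply: eq_bigr => s su; rewrite [RHS]mulr_natl -(sumr_const (mem (fixed_vecs y s))).
by apply: eq_bigl => v; rewrite [s \in _]su !inE.
Qed.

Theorem lemma5p1 (n k : nat) (hn : (1 <= n)%N) (hnk : (n <= k)%N)
  (x y : {set {set 'I_n}}) :
  partition x [set: 'I_n] -> partition y [set: 'I_n] ->
  forall u : vec n k, vpart u = x ->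
  ((((n + 1) ^ (n - 1))%N%:R : rat)^-1 <= BKbar_from u y).
Proof.
move=> _ hy u _; set A := [set u i | i : 'I_n]; set j := (#|y| - #|A|)%N.
have c0A : u (Ordinal hn) \in A by apply: imset_f.
have y_le : (#|y| <= n)%N by have := card_partition_le hy; rewrite cardsT card_ord.
have A_le : (#|A| <= n)%N.
  by apply: leq_trans (leq_imset_card _ _) _; rewrite -[n in (_ <= n)%N]card_ord max_card.
have j_le : (j <= #|~: A|)%N by have := cardsC A; rewrite card_ord; lia.
have stabE : stab u = 'C(A | 'P)%g := stab_astab u.
rewrite BKbar_from_stabE stabE subn1.
apply: (@invXn_le_average _ _ _ (fun s => #|fix_dtuples A j s|) (@nfix k)).
- by rewrite card_gt0; apply/set0Pn; exists 1%g; apply: group1.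
- exact: hn.
- by rewrite addn1.
- move=> s sA; rewrite nfixE card_gt0; apply/set0Pn; exists (u (Ordinal hn)).
  by apply/afix1P; apply: astab_act sA c0A.
- by move=> s sA; rewrite nfixE; exact (card_afix_mul_card_fix_dtuples_le hy c0A hn sA).
- exact: card_astab_le_sum_fix_dtuples.
- under eq_bigr do rewrite nfixE; apply: leq_trans (sum_fix_dtuples_mul_le A j) _.
  by rewrite leq_mul2r; apply/orP; right; lia.
Qed.
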